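(* Let $G$ be a locally compact group, $X$ a proper $G$-space, $H$ a compact subgroup of $G$, and $S\subset X$ a global $H$-slice of $X$ which is a small subset of $X$. Then: (1) the restriction $f:G\times S\to X$, $f(g,s)=gs$, of the action is an open map; (2) the restriction $p:S\to X/G$ of the orbit map $X\to X/G$ is an open map.
   Context: All spaces are completely regular Hausdorff. A $G$-space is a space $X$ with a continuous action $G\times X\to X$, $(g,x)\mapsto gx$, with $ex=x$ and $(gh)x=g(hx)$. For $S\subset X$ and a subgroup $H\subset G$, $H(S)=\{hs\mid h\in H, s\in S\}$; $X/G$ is the orbit space with the quotient topology. For a closed subgroup $H\subset G$, a subset $S\subset X$ is an $H$-slice in $X$ if: (i) $H(S)=S$; (ii) $S$ is closed in $G(S)$; (iii) if $g\in G\setminus H$ then $gS\cap S=\emptyset$; (iv) $G(S)$ is open in $X$. It is a global $H$-slice if moreover $G(S)=X$. For $U,V\subset X$ the transporter is $\langle U,V\rangle=\{g\in G\mid gU\cap V\neq\emptyset\}$; $U$ and $V$ are thin relative to each other if $\langle U,V\rangle$ has compact closure in $G$. A subset $U\subset X$ is small if every point of $X$ has a neighborhood thin relative to $U$. For $G$ locally compact, a $G$-space $X$ is proper if every point of $X$ has a small neighborhood. *)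

From Stdlib Require Import Reals List Classical.

Record TopSpace := {
  carrier :> Type;
  is_open : (carrier -> Prop) -> Prop;
  open_full : is_open (fun _ => True);
  open_inter : forall U V, is_open U -> is_open V -> is_open (fun x => U x /\ V x);
  open_union : forall F : (carrier -> Prop) -> Prop,
      (forall U, F U -> is_open U) -> is_open (fun x => exists U, F U /\ U x)
}.
Arguments is_open {t} _.

Section Top.
Context {X : TopSpace}.

Definition nbhd (N : X -> Prop) (x : X) : Prop :=
  exists U, is_open U /\ U x /\ forall y, U y -> N y.

Definition is_closed (A : X -> Prop) : Prop := is_open (fun x => ~ A x).

Definition closure (A : X -> Prop) : X -> Prop :=
  fun x => forall U, is_open U -> U x -> exists y, U y /\ A y.

Definition compact (K : X -> Prop) : Prop :=
  forall F : (X -> Prop) -> Prop,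
    (forall U, F U -> is_open U) ->
    (forall x, K x -> exists U, F U /\ U x) ->
    exists l : list (X -> Prop),
      (forall U, In U l -> F U) /\ (forall x, K x -> exists U, In U l /\ U x).

Definition rel_compact (A : X -> Prop) : Prop := compact (closure A).

Definition hausdorff : Prop :=
  forall x y : X, x <> y ->
    exists U V, is_open U /\ is_open V /\ U x /\ V y /\ forall z, ~ (U z /\ V z).

Definition continuous_R (f : X -> R) : Prop :=
  forall x eps, (eps > 0)%R ->
    exists U, is_open U /\ U x /\ forall y, U y -> (Rabs (f y - f x) < eps)%R.

Definition completely_regular : Prop :=
  forall (F : X -> Prop) (x : X), is_closed F -> ~ F x ->
    exists f : X -> R, continuous_R f /\ f x = 0%R /\ forall y, F y -> f y = 1%R.

Definition tychonoff : Prop := hausdorff /\ completely_regular.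

Definition locally_compact : Prop :=
  forall x : X, exists K, nbhd K x /\ compact K.

Definition subspace_open (S A : X -> Prop) : Prop :=
  exists W, is_open W /\ forall x, A x <-> (S x /\ W x).

End Top.

Record TopGroup := {
  gspace :> TopSpace;
  gmul : gspace -> gspace -> gspace;
  ginv : gspace -> gspace;
  gone : gspace;
  gmulA : forall a b c, gmul a (gmul b c) = gmul (gmul a b) c;
  gmul1 : forall a, gmul gone a = a;
  gmulV : forall a, gmul (ginv a) a = gone;
  gmul_cont : forall a b (W : gspace -> Prop), is_open W -> W (gmul a b) ->
     exists U V, is_open U /\ is_open V /\ U a /\ V b /\
       forall u v, U u -> V v -> W (gmul u v);
  ginv_cont : forall a (W : gspace -> Prop), is_open W -> W (ginv a) ->
     exists U, is_open U /\ U a /\ forall u, U u -> W (ginv u)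
}.

Section GSpace.
Context {G : TopGroup} {X : TopSpace} (act : G -> X -> X).

Definition is_G_space : Prop :=
  (forall x, act (gone G) x = x) /\
  (forall g h x, act (gmul G g h) x = act g (act h x)) /\
  (forall g x (W : X -> Prop), is_open W -> W (act g x) ->
     exists (U : G -> Prop) (V : X -> Prop), is_open U /\ is_open V /\ U g /\ V x /\
       forall u v, U u -> V v -> W (act u v)).

Definition is_subgroup (H : G -> Prop) : Prop :=
  H (gone G) /\ (forall a b, H a -> H b -> H (gmul G a b)) /\
  (forall a, H a -> H (ginv G a)).

Definition gsat (K : G -> Prop) (S : X -> Prop) : X -> Prop :=
  fun x => exists g s, K g /\ S s /\ x = act g s.

Definition full_group : G -> Prop := fun _ => True.

Definition transporter (U V : X -> Prop) : G -> Prop :=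
  fun g => exists u, U u /\ V (act g u).

Definition thin (U V : X -> Prop) : Prop := rel_compact (transporter U V).

Definition small (U : X -> Prop) : Prop :=
  forall x, exists V, nbhd V x /\ thin V U.

Definition proper_action : Prop :=
  forall x, exists U, nbhd U x /\ small U.

Definition is_slice (H : G -> Prop) (S : X -> Prop) : Prop :=
  (forall x, gsat H S x <-> S x) /\
  (forall x, gsat full_group S x -> closure S x -> S x) /\
  (forall g, ~ H g -> forall s, S s -> ~ S (act g s)) /\
  is_open (gsat full_group S).

Definition is_global_slice (H : G -> Prop) (S : X -> Prop) : Prop :=
  is_slice H S /\ forall x, gsat full_group S x.

(** open subsets of G × S (product of G with the subspace S), as
    relations [O g s] with [s ∈ S] *)
Definition prod_sub_open (S : X -> Prop) (O : G -> X -> Prop) : Prop :=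
  (forall g x, O g x -> S x) /\
  (forall g s, O g s ->
     exists (U : G -> Prop) (W : X -> Prop), is_open U /\ is_open W /\ U g /\ W s /\
       forall g' s', U g' -> W s' -> S s' -> O g' s').

Definition orbit (x : X) : X -> Prop := fun y => exists g, y = act g x.

Definition orbit_space : Type := { O : X -> Prop | exists x, O = orbit x }.

Definition orbit_map (x : X) : orbit_space :=
  exist _ (orbit x) (ex_intro _ x eq_refl).

Definition quotient_open (V : orbit_space -> Prop) : Prop :=
  is_open (fun x => V (orbit_map x)).

End GSpace.

(* Fix O open in G × S and a point g0 s0 with (g0, s0) ∈ O.  Since S is small, some
   neighborhood V of s0 has a transporter <V, S> with compact closure.  For each k in
   that closure, either k s0 ∉ S, and then g y ∉ S for (g, y) near (k, s0) because S is
   closed; or k s0 ∈ S, so k ∈ H by the slice property, and for g near k and y near s0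
   with g y ∈ S one can write g0 y = (g0 g⁻¹ k)(k⁻¹ g y) with (g0 g⁻¹ k, k⁻¹ g y) ∈ O.
   Compactness yields one neighborhood Q of s0 working for all k at once, and g0 (V ∩ Q)
   is then a neighborhood of g0 s0 inside the image of O: a point g0 y = g s of it
   satisfies (g⁻¹ g0) y ∈ S, so g⁻¹ g0 lies in the transporter.  Openness of the orbit
   map on S follows from (1) applied to G × A, as the saturation of A is its image. *)
From Stdlib Require Import List Classical FunctionalExtensionality PropExtensionality
  ProofIrrelevance.

Section Topology.

Lemma open_of_locally_open {T : TopSpace} (A : T -> Prop) :
  (forall x, A x -> exists N, is_open N /\ N x /\ forall y, N y -> A y) -> is_open A.
Proof.
  intros HA.
  replace A with (fun x => exists U, (is_open U /\ forall y, U y -> A y) /\ U x).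
  - apply open_union. intros U [HU _]; exact HU.
  - apply functional_extensionality; intro x; apply propositional_extensionality; split.
    + intros [U [[_ HUA] Ux]]; auto.
    + intros Ax. destruct (HA x Ax) as [N [HN [Nx HNA]]]. exists N; auto.
Qed.

Lemma open_ext {T : TopSpace} (A B : T -> Prop) :
  is_open A -> (forall x, A x <-> B x) -> is_open B.
Proof.
  intros HA HAB. replace B with A; [exact HA|].
  apply functional_extensionality; intro x; apply propositional_extensionality, HAB.
Qed.

Lemma open_compl_of_closure_sub {T : TopSpace} (A : T -> Prop) :
  (forall x, closure A x -> A x) -> is_open (fun x => ~ A x).
Proof.
  intros Hcl. apply open_of_locally_open. intros y Ny.
  assert (Ncl : ~ closure A y) by (intro C; exact (Ny (Hcl y C))).
  apply not_all_ex_not in Ncl as [U HU].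
  apply imply_to_and in HU as [HUo HU]. apply imply_to_and in HU as [Uy HU].
  exists U. repeat split; auto. intros z Uz Az. apply HU. exists z; auto.
Qed.

Definition cont_at {A B : TopSpace} (f : A -> B) (a : A) : Prop :=
  forall W, is_open W -> W (f a) ->
    exists U, is_open U /\ U a /\ forall u, U u -> W (f u).

Lemma cont_at_comp {A B C : TopSpace} (f : A -> B) (g : B -> C) (a : A) :
  cont_at f a -> cont_at g (f a) -> cont_at (fun x => g (f x)) a.
Proof.
  intros Hf Hg W HW Wa. destruct (Hg W HW Wa) as [U [HU [Ua HUW]]].
  destruct (Hf U HU Ua) as [U' [HU' [U'a HU'U]]]. exists U'; auto.
Qed.

Lemma compact_tube {A B : TopSpace} (K : A -> Prop) (b : B)
    (good : (A -> Prop) -> (B -> Prop) -> Prop) :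
  compact K ->
  (forall P Q Q', (forall y, Q' y -> Q y) -> good P Q -> good P Q') ->
  (forall a, K a -> exists P Q, is_open P /\ P a /\ is_open Q /\ Q b /\ good P Q) ->
  exists Q, is_open Q /\ Q b /\ forall a, K a -> exists P, P a /\ good P Q.
Proof.
  intros HK Hmono Hloc.
  destruct (HK (fun P => is_open P /\ exists Q, is_open Q /\ Q b /\ good P Q))
    as [l [Hl Hcov]].
  { intros P [HP _]; exact HP. }
  { intros a Ka. destruct (Hloc a Ka) as [P [Q [HP [Pa [HQ [Qb HPQ]]]]]].
    exists P; split; [|exact Pa]. split; [exact HP|]. exists Q; auto. }
  assert (Hcommon : exists Q, is_open Q /\ Q b /\ forall P, In P l -> good P Q).
  { clear Hcov. induction l as [|P0 l IH].
    - exists (fun _ => True). repeat split; [apply open_full | intros P []].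
    - destruct (Hl P0 (or_introl eq_refl)) as [_ [Q0 [HQ0 [Q0b HPQ0]]]].
      destruct IH as [Q1 [HQ1 [Q1b HPQ1]]]; [intros P HP; apply Hl; right; exact HP|].
      exists (fun y => Q0 y /\ Q1 y). split; [apply open_inter; auto|]. split; [auto|].
      intros P [<- | HP].
      + apply (Hmono P0 Q0); [intros y []|]; auto.
      + apply (Hmono P Q1); [intros y []|]; auto. }
  destruct Hcommon as [Q [HQ [Qb HlQ]]].
  exists Q. repeat split; auto. intros a Ka.
  destruct (Hcov a Ka) as [P [Pl Pa]]. exists P; auto.
Qed.

End Topology.

Section Group.
Context {G : TopGroup}.
Local Notation "a * b" := (gmul G a b).
Local Notation "1" := (gone G).
Local Notation inv := (ginv G).

Lemma gmulV_r (g : G) : g * inv g = 1.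
Proof.
  rewrite <- (gmul1 G (g * inv g)), <- (gmulV G (inv g)) at 1.
  rewrite <- gmulA, (gmulA G (inv g) g (inv g)), gmulV, gmul1. apply gmulV.
Qed.

Lemma gmul1_r (g : G) : g * 1 = g.
Proof. rewrite <- (gmulV G g), gmulA, gmulV_r, gmul1. reflexivity. Qed.

Lemma cont_at_gmull (c a : G) : cont_at (fun g => c * g) a.
Proof.
  intros W HW Wa. destruct (gmul_cont G c a W HW Wa) as [U [V [_ [HV [Uc [Va HUV]]]]]].
  exists V; auto.
Qed.

Lemma cont_at_gmulr (c a : G) : cont_at (fun g => g * c) a.
Proof.
  intros W HW Wa. destruct (gmul_cont G a c W HW Wa) as [U [V [HU [_ [Ua [Vc HUV]]]]]].
  exists U; auto.
Qed.

Lemma cont_at_ginv (a : G) : cont_at inv a.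
Proof. intros W HW Wa. exact (ginv_cont G a W HW Wa). Qed.

End Group.

Section Action.
Context {G : TopGroup} {X : TopSpace} (act : G -> X -> X).
Hypothesis hact : is_G_space act.

Lemma act1 (x : X) : act (gone G) x = x.
Proof. exact (proj1 hact x). Qed.

Lemma actM (g h : G) (x : X) : act (gmul G g h) x = act g (act h x).
Proof. exact (proj1 (proj2 hact) g h x). Qed.

Lemma act_ginvK (g : G) (x : X) : act (ginv G g) (act g x) = x.
Proof. rewrite <- actM, gmulV. apply act1. Qed.

Lemma act_ginvKV (g : G) (x : X) : act g (act (ginv G g) x) = x.
Proof. rewrite <- actM, gmulV_r. apply act1. Qed.

Lemma open_preimage_act (g : G) (W : X -> Prop) :
  is_open W -> is_open (fun x => W (act g x)).
Proof.
  intros HW. apply open_of_locally_open. intros x Wx.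
  destruct (proj2 (proj2 hact) g x W HW Wx) as [U [V [_ [HV [Ug [Vx HUV]]]]]].
  exists V; auto.
Qed.

Definition act_image (O : G -> X -> Prop) : X -> Prop :=
  fun x => exists g s, O g s /\ x = act g s.

Lemma orbit_map_eq (x y : X) : orbit_map act x = orbit_map act y <-> exists g, x = act g y.
Proof.
  split.
  - intros E. apply EqdepFacts.eq_sig_fst in E.
    assert (Hx : orbit act x x) by (exists (gone G); symmetry; apply act1).
    rewrite E in Hx. exact Hx.
  - intros [g ->]. apply subset_eq_compat.
    apply functional_extensionality; intro z; apply propositional_extensionality.
    split; intros [h ->].
    + exists (gmul G h g). symmetry; apply actM.
    + exists (gmul G h (ginv G g)). rewrite actM, act_ginvK. reflexivity.
Qed.

End Action.

Section SliceImage.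
Context {G : TopGroup} {X : TopSpace} (act : G -> X -> X) (H : G -> Prop) (S : X -> Prop).
Hypothesis hact : is_G_space act.
Hypothesis hH : is_subgroup H.
Hypothesis hS : is_global_slice act H S.
Variable O : G -> X -> Prop.
Hypothesis hO : prod_sub_open S O.

Definition lifts_near (g0 : G) (P : G -> Prop) (Q : X -> Prop) : Prop :=
  forall g y, P g -> Q y -> S (act g y) -> act_image act O (act g0 y).

Lemma lifts_near_shrink g0 P Q Q' :
  (forall y, Q' y -> Q y) -> lifts_near g0 P Q -> lifts_near g0 P Q'.
Proof. intros HQ HPQ g y Pg Q'y. apply HPQ; auto. Qed.

Lemma lifts_near_off_slice (g0 k : G) (s0 : X) :
  ~ S (act k s0) ->
  exists P Q, is_open P /\ P k /\ is_open Q /\ Q s0 /\ lifts_near g0 P Q.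
Proof.
  intros NS.
  assert (HSc : is_open (fun x => ~ S x)).
  { apply open_compl_of_closure_sub. intros x Cx.
    exact (proj1 (proj2 (proj1 hS)) x (proj2 hS x) Cx). }
  destruct (proj2 (proj2 hact) k s0 _ HSc NS) as [P [Q [HP [HQ [Pk [Qs0 HPQ]]]]]].
  exists P, Q. repeat split; auto.
  intros g y Pg Qy Sgy. exfalso. exact (HPQ g y Pg Qy Sgy).
Qed.

Lemma lifts_near_on_slice (g0 k : G) (s0 : X) :
  O g0 s0 -> H k ->
  exists P Q, is_open P /\ P k /\ is_open Q /\ Q s0 /\ lifts_near g0 P Q.
Proof.
  intros Og0 Hk.
  destruct (proj2 hO g0 s0 Og0) as [U [W [HU [HW [Ug0 [Ws0 HUW]]]]]].
  set (u := fun g => gmul G (gmul G g0 (ginv G g)) k).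
  assert (Huk : U (u k)).
  { unfold u. rewrite <- gmulA, gmulV, gmul1_r. exact Ug0. }
  assert (Hcont : cont_at u k).
  { apply (cont_at_comp (fun g => gmul G g0 (ginv G g)) (fun h => gmul G h k)).
    - apply (cont_at_comp (ginv G) (fun h => gmul G g0 h));
        [apply cont_at_ginv | apply cont_at_gmull].
    - apply cont_at_gmulr. }
  destruct (Hcont U HU Huk) as [P1 [HP1 [P1k HP1U]]].
  assert (HWk : W (act (ginv G k) (act k s0))) by (rewrite act_ginvK; auto).
  destruct (proj2 (proj2 hact) k s0 _ (open_preimage_act act hact (ginv G k) W HW) HWk)
    as [P2 [Q [HP2 [HQ [P2k [Qs0 HPQ]]]]]].
  exists (fun g => P1 g /\ P2 g), Q.
  split; [apply open_inter; auto|]. repeat split; auto.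
  intros g y [P1g P2g] Qy Sgy.
  (* g0 y = (g0 g⁻¹ k) (k⁻¹ g y) *)
  exists (u g), (act (ginv G k) (act g y)). split.
  - apply HUW; auto.
    apply (proj1 (proj1 (proj1 hS) _)).
    exists (ginv G k), (act g y). repeat split; auto. exact (proj2 (proj2 hH) k Hk).
  - unfold u. rewrite (actM act hact), act_ginvKV, (actM act hact), act_ginvK; auto.
Qed.

Lemma lifts_near_everywhere (g0 k : G) (s0 : X) :
  O g0 s0 ->
  exists P Q, is_open P /\ P k /\ is_open Q /\ Q s0 /\ lifts_near g0 P Q.
Proof.
  intros Og0. destruct (classic (S (act k s0))) as [Sks0 | NS].
  - apply lifts_near_on_slice; auto. apply NNPP. intros NHk.
    exact (proj1 (proj2 (proj2 (proj1 hS))) k NHk s0 (proj1 hO g0 s0 Og0) Sks0).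
  - apply lifts_near_off_slice; exact NS.
Qed.

Hypothesis hSs : small act S.

Lemma act_image_nbhd (g0 : G) (s0 : X) :
  O g0 s0 -> exists N, is_open N /\ N (act g0 s0) /\ forall x, N x -> act_image act O x.
Proof.
  intros Og0. destruct (hSs s0) as [V [[V0 [HV0 [V0s0 HV0V]]] Hthin]].
  destruct (compact_tube (closure (transporter act V S)) s0 (lifts_near g0) Hthin
              (lifts_near_shrink g0) (fun k _ => lifts_near_everywhere g0 k s0 Og0))
    as [Q [HQ [Qs0 HQgood]]].
  exists (fun x => V0 (act (ginv G g0) x) /\ Q (act (ginv G g0) x)). split; [|split].
  - apply open_inter; apply open_preimage_act; auto.
  - rewrite act_ginvK; auto.
  - intros x [V0y Qy]. set (y := act (ginv G g0) x) in *.
    destruct (proj2 hS x) as [g [s [_ [Ss ->]]]].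
    assert (Hks : act (gmul G (ginv G g) g0) y = s).
    { unfold y. rewrite (actM act hact), act_ginvKV, act_ginvK; auto. }
    assert (Hk : closure (transporter act V S) (gmul G (ginv G g) g0)).
    { intros U' _ U'k. exists (gmul G (ginv G g) g0). split; [exact U'k|].
      exists y. split; [apply HV0V; exact V0y | rewrite Hks; exact Ss]. }
    destruct (HQgood _ Hk) as [P [Pk HPQ]].
    replace (act g s) with (act g0 y) by (unfold y; apply act_ginvKV; auto).
    apply HPQ with (g := gmul G (ginv G g) g0); auto. rewrite Hks; exact Ss.
Qed.

Lemma act_image_open : is_open (act_image act O).
Proof.
  apply open_of_locally_open. intros x [g0 [s0 [Og0 ->]]].
  exact (act_image_nbhd g0 s0 Og0).
Qed.

End SliceImage.

Lemma prod_sub_open_of_subspace_open {G : TopGroup} {X : TopSpace} (S A : X -> Prop) :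
  subspace_open S A -> prod_sub_open (G := G) S (fun _ s => A s).
Proof.
  intros [W [HW HA]]. split.
  - intros _ x Ax. exact (proj1 (proj1 (HA x) Ax)).
  - intros g s As. exists (fun _ => True), W.
    repeat split; auto using open_full.
    + exact (proj2 (proj1 (HA s) As)).
    + intros g' s' _ Ws' Ss'. apply HA; auto.
Qed.

Theorem theorem2p1 (G : TopGroup) (X : TopSpace) (act : G -> X -> X)
  (H : G -> Prop) (S : X -> Prop)
  (hGt : @tychonoff G) (hXt : @tychonoff X)
  (hGlc : @locally_compact G)
  (hact : is_G_space act)
  (hprop : proper_action act)
  (hH : is_subgroup H) (hHc : compact H)
  (hS : is_global_slice act H S)
  (hSs : small act S) :
  (forall O : G -> X -> Prop, prod_sub_open S O ->
     is_open (fun x => exists g s, O g s /\ x = act g s))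
  /\
  (forall A : X -> Prop, subspace_open S A ->
     quotient_open act (fun o => exists s, A s /\ o = orbit_map act s)).
Proof.
  split.
  - intros O hO. exact (act_image_open act H S hact hH hS O hO hSs).
  - intros A hA. unfold quotient_open.
    apply (open_ext (act_image act (fun (_ : G) s => A s))).
    + exact (act_image_open act H S hact hH hS _ (prod_sub_open_of_subspace_open S A hA) hSs).
    + intros x. split.
      * intros [g [s [As ->]]]. exists s. split; [exact As|].
        apply (orbit_map_eq act hact). exists g; reflexivity.
      * intros [s [As E]]. apply (orbit_map_eq act hact) in E as [g ->]. exists g, s; auto.
Qed.
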